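(* Let $\Lambda=(I,\varphi_i,\gamma_{ij})$ be a direct system of formulas in a functional language $\mathcal{L}$. Suppose $\{\mathcal{B}_i: i\in I\}$ is a family of $\mathcal{L}$-algebras such that $\varphi_i$ can be realized in $\mathcal{B}_i$ for each $i\in I$. Then there is an ultrafilter $D$ over $I$ such that the limit algebra $L(\Lambda)$ embeds into the ultraproduct $\prod_{i\in I}\mathcal{B}_i/D$.
   Context: Functional language: operation symbols $F$ (arity $n_F$) and constants only. A diagram-formula in a finite reduct $\mathcal{L}'$ of $\mathcal{L}$ in a finite variable set $X$ is a conjunction of atomic formulas and negated atomic formulas of $\mathcal{L}'$ such that: $\neg(x=y)$ is a conjunct for all distinct $x,y\in X$; for each operation $F\in\mathcal{L}'$ and $(x_0,\dots,x_{n_F})\in X^{n_F+1}$ exactly one of $F(x_1,\dots,x_{n_F})=x_0$ and its negation is a conjunct; for each constant $c\in\mathcal{L}'$ and $x\in X$ exactly one of $x=c$, $\neg(x=c)$ is a conjunct. A direct system of formulas $\Lambda=(I,\varphi_i,\gamma_{ij})$: $(I,\le)$ a directed poset; for each $i$ a consistent diagram-formula $\varphi_i$ in a finite reduct $\mathcal{L}_i$ and finite variables $X_i$; maps $\gamma_{ij}:X_i\to X_j$ for $i\le j$ with $\gamma_{ii}=\mathrm{id}$, $\gamma_{jk}\circ\gamma_{ij}=\gamma_{ik}$, and every conjunct of $\varphi_i(\gamma_{ij}(X_i))$ a conjunct of $\varphi_j$; for every constant $c$ some $\varphi_i$ has a conjunct $x=c$ with $x\in X_i$; for every $F$, $i$,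 $(x_1,\dots,x_{n_F})\in X_i^{n_F}$ there is $j\ge i$ with a conjunct $F(\gamma_{ij}(x_1),\dots,\gamma_{ij}(x_{n_F}))=x_j$ in $\varphi_j$, $x_j\in X_j$. The limit algebra $L(\Lambda)$ has universe $\{(x,i):x\in X_i,i\in I\}/\!\equiv$, where $(x,i)\equiv(y,j)$ iff $\gamma_{ik}(x)=\gamma_{jk}(y)$ for some $k\ge i,j$; the constant $c$ is the class $\langle x,i\rangle$ of any $(x,i)$ with $x=c$ a conjunct of $\varphi_i$, and $F(\langle x_1,i_1\rangle,\dots,\langle x_{n_F},i_{n_F}\rangle)=\langle x_j,j\rangle$ for any $j\ge i_1,\dots,i_{n_F}$ such that $\varphi_j$ contains $F(\gamma_{i_1j}(x_1),\dots,\gamma_{i_{n_F}j}(x_{n_F}))=x_j$ (this is well defined). A formula $\varphi_i$ is realized in $\mathcal{B}$ if it is true in $\mathcal{B}$ under some assignment $X_i\to B$. *)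

From mathcomp Require Import all_boot.
From Stdlib Require List.
From Stdlib Require Import ClassicalEpsilon.

Set Implicit Arguments.
Unset Strict Implicit.
Unset Printing Implicit Defensive.

Record language := Language {
  lop : Type;
  lar : lop -> nat;
  lcst : Type
}.

(** An L-algebra (L-structure of a functional language); as usual in model
    theory the universe is nonempty. *)
Record algebra (L : language) := Algebra {
  acar :> Type;
  aop : forall F : lop L, ('I_(lar F) -> acar) -> acar;
  acst : lcst L -> acar;
  acar_inhabited : inhabited acar
}.

Arguments aop {L} a F _.
Arguments acst {L} a _.

Inductive term (L : language) (V : Type) : Type :=
| tvar : V -> term L V
| tcst : lcst L -> term L V
| tapp : forall F : lop L, ('I_(lar F) -> term L V) -> term L V.

Arguments tvar {L V} _.
Arguments tcst {L V} _.
Arguments tapp {L V} F _.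

(** A literal: an atomic formula [t1 = t2] (sign [true]) or its negation
    [~ (t1 = t2)] (sign [false]). *)
Inductive literal (L : language) (V : Type) : Type :=
| Lit : bool -> term L V -> term L V -> literal L V.

Arguments Lit {L V} _ _ _.

Definition lpos {L V} (t1 t2 : term L V) := Lit true t1 t2.
Definition lneg {L V} (t1 t2 : term L V) := Lit false t1 t2.

(** A conjunction of literals, represented by the list of its conjuncts. *)
Definition formula (L : language) (V : Type) := list (literal L V).

Definition conjunct {L V} (l : literal L V) (phi : formula L V) : Prop :=
  List.In l phi.

Fixpoint tmap {L : language} {V W : Type} (f : V -> W) (t : term L V)
  : term L W :=
  match t with
  | tvar v => tvar (f v)
  | tcst c => tcst c
  | tapp F args => tapp F (fun k => tmap f (args k))
  end.

Definition lmap {L : language} {V W : Type} (f : V -> W) (l : literal L V)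
  : literal L W :=
  match l with Lit b t1 t2 => Lit b (tmap f t1) (tmap f t2) end.

Fixpoint term_in {L : language} {V : Type}
  (ops : list (lop L)) (cs : list (lcst L)) (t : term L V) : Prop :=
  match t with
  | tvar _ => True
  | tcst c => List.In c cs
  | tapp F args => List.In F ops /\ forall k, term_in ops cs (args k)
  end.

Definition literal_in {L : language} {V : Type}
  (ops : list (lop L)) (cs : list (lcst L)) (l : literal L V) : Prop :=
  match l with Lit _ t1 t2 => term_in ops cs t1 /\ term_in ops cs t2 end.

Fixpoint eval {L : language} {V : Type} (A : algebra L) (s : V -> A)
  (t : term L V) : A :=
  match t with
  | tvar v => s v
  | tcst c => acst A c
  | tapp F args => aop A F (fun k => @eval L V A s (args k))
  end.

Arguments eval {L V} A s t.

Definition sat_lit {L : language} {V : Type} (A : algebra L) (s : V -> A)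
  (l : literal L V) : Prop :=
  match l with
  | Lit true t1 t2 => @eval L V A s t1 = @eval L V A s t2
  | Lit false t1 t2 => @eval L V A s t1 <> @eval L V A s t2
  end.

Arguments sat_lit {L V} A s l.

Definition sat {L : language} {V : Type} (A : algebra L) (s : V -> A)
  (phi : formula L V) : Prop :=
  forall l, conjunct l phi -> sat_lit A s l.

Arguments sat {L V} A s phi.

Definition realized {L : language} {V : Type} (A : algebra L)
  (phi : formula L V) : Prop :=
  exists s : V -> A, sat A s phi.

Definition consistent {L : language} {V : Type} (phi : formula L V) : Prop :=
  exists A : algebra L, realized A phi.

Definition exactly_one {L : language} {V : Type} (phi : formula L V)
  (t1 t2 : term L V) : Prop :=
  (conjunct (lpos t1 t2) phi \/ conjunct (lneg t1 t2) phi) /\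
  ~ (conjunct (lpos t1 t2) phi /\ conjunct (lneg t1 t2) phi).

Definition diagram_formula {L : language} (X : finType)
  (ops : list (lop L)) (cs : list (lcst L)) (phi : formula L X) : Prop :=
  (forall l, conjunct l phi -> literal_in ops cs l) /\
  (forall x y : X, x != y -> conjunct (lneg (tvar x) (tvar y)) phi) /\
  (forall F, List.In F ops ->
     forall (xs : 'I_(lar F) -> X) (x0 : X),
       exactly_one phi (tapp F (fun k => tvar (xs k))) (tvar x0)) /\
  (forall c, List.In c cs -> forall x : X,
       exactly_one phi (tvar x) (tcst c)).

Record direct_system (L : language) := DirectSystem {
  ds_I : Type;
  ds_le : ds_I -> ds_I -> Prop;
  ds_X : ds_I -> finType;
  ds_ops : ds_I -> list (lop L);
  ds_csts : ds_I -> list (lcst L);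
  ds_phi : forall i, formula L (ds_X i);
  ds_gamma : forall i j, ds_X i -> ds_X j     (* gamma_ij (used for i <= j) *)
}.

Arguments ds_I {L} d.
Arguments ds_le {L} d _ _.
Arguments ds_X {L} d _.
Arguments ds_ops {L} d _.
Arguments ds_csts {L} d _.
Arguments ds_phi {L} d i.
Arguments ds_gamma {L} _ {i j} _.

(** A directed poset (directed sets are nonempty). *)
Definition directed_poset (I : Type) (le : I -> I -> Prop) : Prop :=
  (forall i, le i i) /\
  (forall i j, le i j -> le j i -> i = j) /\
  (forall i j k, le i j -> le j k -> le i k) /\
  inhabited I /\
  (forall i j, exists k, le i k /\ le j k).

Definition is_direct_system {L : language} (Lam : direct_system L) : Prop :=
  let I := ds_I Lam in
  let le := ds_le Lam in
  let X := ds_X Lam in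
  let phi := ds_phi Lam in
  let g := @ds_gamma L Lam in
  directed_poset le /\
  (forall i, diagram_formula (ds_ops Lam i) (ds_csts Lam i) (phi i)) /\
  (forall i, consistent (phi i)) /\
  (forall i (x : X i), g i i x = x) /\
  (forall i j k, le i j -> le j k -> forall x : X i, g j k (g i j x) = g i k x) /\
  (forall i j, le i j -> forall l, conjunct l (phi i) ->
       conjunct (lmap (g i j) l) (phi j)) /\
  (forall c : lcst L, exists i (x : X i),
       conjunct (lpos (tvar x) (tcst c)) (phi i)) /\
  (forall (F : lop L) i (xs : 'I_(lar F) -> X i),
     exists j (xj : X j), le i j /\
       conjunct (lpos (tapp F (fun k => tvar (g i j (xs k)))) (tvar xj)) (phi j)).

Definition quot (T : Type) (R : T -> T -> Prop) : Type :=
  {P : T -> Prop | exists t, P = R t}.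

Definition qclass {T : Type} {R : T -> T -> Prop} (t : T) : quot R :=
  exist (fun P => exists t, P = R t) (R t) (ex_intro _ t erefl).

Definition qrepr {T : Type} {R : T -> T -> Prop} (q : quot R) : T :=
  proj1_sig (constructive_indefinite_description _ (proj2_sig q)).

Definition lim_pair {L} (Lam : direct_system L) := {i : ds_I Lam & ds_X Lam i}.

Definition lim_equiv {L} (Lam : direct_system L) (p q : lim_pair Lam) : Prop :=
  exists k, ds_le Lam (tag p) k /\ ds_le Lam (tag q) k /\
            ds_gamma Lam (tagged p) = ds_gamma Lam (tagged q) :> ds_X Lam k.

Arguments lim_equiv {L} Lam p q.

Definition lim_car {L} (Lam : direct_system L) := quot (lim_equiv Lam).

Definition lim_class {L} (Lam : direct_system L) (i : ds_I Lam)
  (x : ds_X Lam i) : lim_car Lam :=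
  qclass (existT _ i x).

Definition ultrafilter (I : Type) (D : (I -> Prop) -> Prop) : Prop :=
  D (fun _ => True) /\
  ~ D (fun _ => False) /\
  (forall A B : I -> Prop, (forall i, A i -> B i) -> D A -> D B) /\
  (forall A B : I -> Prop, D A -> D B -> D (fun i => A i /\ B i)) /\
  (forall A : I -> Prop, D A \/ D (fun i => ~ A i)).

Section Ultraproduct.
Context {L : language} {I : Type} (B : I -> algebra L) (D : (I -> Prop) -> Prop).

Definition up_eq (f g : forall i, B i) : Prop := D (fun i => f i = g i).

Definition up_car : Type := quot up_eq.

Definition up_cst (c : lcst L) : up_car :=
  qclass (fun i => acst (B i) c).

Definition up_op (F : lop L) (args : 'I_(lar F) -> up_car) : up_car :=
  qclass (fun i => aop (B i) F (fun k => qrepr (args k) i)).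

End Ultraproduct.

Arguments up_eq {L I} B D f g.
Arguments up_car {L I} B D.
Arguments up_cst {L I} B D c.
Arguments up_op {L I} B D F args.

(** The operations of L(Lambda) are given by the
    defining clauses of the paper: c^{L(Lambda)} = <x,i> whenever [x = c] is a
    conjunct of phi_i, and F(<x_1,i_1>,...,<x_n,i_n>) = <x_j,j> whenever
    j >= i_1..i_n and phi_j contains F(gamma_{i_1 j} x_1, ...) = x_j. *)
Definition lim_embedding {L : language} (Lam : direct_system L)
  (B : ds_I Lam -> algebra L) (D : (ds_I Lam -> Prop) -> Prop)
  (h : lim_car Lam -> up_car B D) : Prop :=
  (forall a b, h a = h b -> a = b) /\
  (forall (c : lcst L) i (x : ds_X Lam i),
     conjunct (lpos (tvar x) (tcst c)) (ds_phi Lam i) ->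
     h (lim_class x) = up_cst B D c) /\
  (forall (F : lop L) (j : ds_I Lam) (idx : 'I_(lar F) -> ds_I Lam)
          (xs : forall k, ds_X Lam (idx k)) (xj : ds_X Lam j),
     (forall k, ds_le Lam (idx k) j) ->
     conjunct (lpos (tapp F (fun k => tvar (ds_gamma Lam (xs k)))) (tvar xj))
              (ds_phi Lam j) ->
     h (lim_class xj) = up_op B D F (fun k => h (lim_class (xs k)))).
Arguments lim_embedding {L} Lam B D h.

From mathcomp Require Import all_boot.
From mathcomp Require Import boolp classical_sets filter.
From Stdlib Require Import ProofIrrelevance Classical.

(* Fix realizations s_i of phi_i in B_i and an ultrafilter D containing every
   cone {l | i <= l}; the cones have the finite intersection property because
   I is directed.  Send <x,i> to the class of the thread (s_l (gamma_il x))_l.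
   On the cone above i, phi_l contains the gamma_il-images of the conjuncts of
   phi_i, so every equation or inequation of the limit algebra holds in B_l
   for D-almost all l, hence in the ultraproduct: the map is well defined,
   injective and preserves constants and operations. *)

Section Ultrafilter.
Context {I : Type} {D : (I -> Prop) -> Prop} (HD : ultrafilter D).

Lemma ultrafilterT : D (fun _ => True).
Proof. by case: HD. Qed.

Lemma ultrafilter_neq0 : ~ D (fun _ => False).
Proof. by case: HD => _ []. Qed.

Lemma ultrafilterS {P Q : I -> Prop} : D P -> (forall i, P i -> Q i) -> D Q.
Proof. by move=> DP PQ; case: HD => _ [_ [mono _]]; apply: mono DP. Qed.

Lemma ultrafilterI {P Q : I -> Prop} : D P -> D Q -> D (fun i => P i /\ Q i).
Proof. by case: HD => _ [_ [_ [+ _]]]; apply. Qed.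

Lemma ultrafilter_ex {P : I -> Prop} : D P -> exists i, P i.
Proof.
move=> DP; apply: NNPP => noP; apply: ultrafilter_neq0.
by apply: (ultrafilterS DP) => i Pi; apply: noP; exists i.
Qed.

Lemma ultrafilter_forall {T : finType} {P : T -> I -> Prop} :
  (forall k, D (P k)) -> D (fun i => forall k, P k i).
Proof.
move=> DP.
suff Dr (r : seq T) : D (fun i => forall k, k \in r -> P k i).
  by apply: (ultrafilterS (Dr (enum T))) => i Pi k; apply: Pi; rewrite mem_enum.
elim: r => [|a r IHr]; first by apply: (ultrafilterS ultrafilterT).
apply: (ultrafilterS (ultrafilterI (DP a) IHr)) => i [Pa Pr] k.
by rewrite in_cons => /orP [/eqP -> //|]; apply: Pr.
Qed.

Lemma up_eq_refl {L : language} (B : I -> algebra L) f : up_eq B D f f.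
Proof. by apply: (ultrafilterS ultrafilterT). Qed.

Lemma up_eq_sym {L : language} (B : I -> algebra L) f f' :
  up_eq B D f f' -> up_eq B D f' f.
Proof. by move=> E; apply: (ultrafilterS E). Qed.

Lemma up_eq_trans {L : language} (B : I -> algebra L) f1 f2 f3 :
  up_eq B D f1 f2 -> up_eq B D f2 f3 -> up_eq B D f1 f3.
Proof.
by move=> E12 E23; apply: (ultrafilterS (ultrafilterI E12 E23)) => i [-> ->].
Qed.

End Ultrafilter.

Lemma directed_cones_ultrafilter {I : Type} {le : I -> I -> Prop} :
  directed_poset le -> exists D, ultrafilter D /\ forall i, D (fun l => le i l).
Proof.
move=> [le_refl [_ [le_trans [[i0] le_dir]]]].
pose F := filter_from setT (fun i => (fun l => le i l)).
have F_proper : ProperFilter F.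
  apply: filter_from_proper; last by move=> i _; exists i; apply: le_refl.
  apply: filter_fromT_filter; first by exists i0.
  move=> i j; have [k [ik jk]] := le_dir i j.
  by exists k => l /= kl; split; apply: le_trans kl.
have [G [G_ultra FG]] := ultraFilterLemma F_proper.
exists G; split; last by move=> i; apply: FG; exists i.
split; first exact: filterT.
split; first exact: (filter_not_empty G).
split; first by move=> A C AC; apply: filterS.
split; first by move=> A C GA GC; apply: filterI.
by move=> A; apply: in_ultra_setVsetC.
Qed.

Section Quotient.
Variables (T : Type) (R : T -> T -> Prop).
Hypotheses (R_refl : forall a, R a a) (R_sym : forall a b, R a b -> R b a)
  (R_trans : forall a b c, R a b -> R b c -> R a c).

Lemma eq_qclass a b : (qclass a = qclass b :> quot R) <-> R a b.
Proof.
split=> [/(f_equal (@proj1_sig _ _)) /= -> | Rab]; first exact: R_refl.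
apply: subset_eq_compat; apply: funext => c; apply: propext.
by split; [apply: R_trans; apply: R_sym | apply: R_trans].
Qed.

Lemma qrepr_spec (q : quot R) : proj1_sig q = R (qrepr q).
Proof.
by rewrite /qrepr; case: (ClassicalEpsilon.constructive_indefinite_description _ _).
Qed.

Lemma qreprK (q : quot R) : qclass (qrepr q) = q.
Proof. by case: q => P P_class; apply: subset_eq_compat; rewrite -qrepr_spec. Qed.

Lemma qrepr_qclass a : R a (qrepr (qclass a : quot R)).
Proof. by have /= -> := qrepr_spec (qclass a); apply: R_refl. Qed.

End Quotient.

Arguments eq_qclass {T R}.
Arguments qreprK {T R}.
Arguments qrepr_qclass {T R}.

Section DirectSystem.
Variables (L : language) (Lam : direct_system L).
Hypothesis HLam : is_direct_system Lam.

Local Notation le := (ds_le Lam).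
Local Notation gamma i j := (@ds_gamma L Lam i j).

Lemma ds_le_refl i : le i i.
Proof. by case: HLam => [[]]. Qed.

Lemma ds_le_trans {i j k} : le i j -> le j k -> le i k.
Proof. by case: HLam => [[_ [_ [+ _]]] _]; apply. Qed.

Lemma ds_directed i j : exists k, le i k /\ le j k.
Proof. by case: HLam => [[_ [_ [_ [_ +]]]] _]; apply. Qed.

Lemma ds_gamma_comp {i j k} : le i j -> le j k ->
  forall x : ds_X Lam i, gamma j k (gamma i j x) = gamma i k x.
Proof. by case: HLam => [_ [_ [_ [_ [+ _]]]]]; apply. Qed.

Lemma ds_phi_gamma {i j} {l : literal L (ds_X Lam i)} : le i j ->
  conjunct l (ds_phi Lam i) -> conjunct (lmap (gamma i j) l) (ds_phi Lam j).
Proof. by case: HLam => [_ [_ [_ [_ [_ [phi_gamma _]]]]]] ij; apply: phi_gamma. Qed.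

Lemma ds_phi_neq i (x y : ds_X Lam i) :
  x != y -> conjunct (lneg (tvar x) (tvar y)) (ds_phi Lam i).
Proof. by case: HLam => [_ [/(_ i) [_ [+ _]] _]]; apply. Qed.

Lemma lim_equiv_refl p : lim_equiv Lam p p.
Proof. by exists (tag p); do !split; apply: ds_le_refl. Qed.

Lemma lim_equiv_sym p q : lim_equiv Lam p q -> lim_equiv Lam q p.
Proof. by move=> [k [pk [qk E]]]; exists k. Qed.

Lemma lim_equiv_eventually p q : lim_equiv Lam p q ->
  exists k, forall l, le k l -> [/\ le (tag p) l, le (tag q) l &
    gamma _ l (tagged p) = gamma _ l (tagged q)].
Proof.
move=> [k [pk [qk E]]]; exists k => l kl.
split; [exact: ds_le_trans pk kl | exact: ds_le_trans qk kl |].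
by rewrite -(ds_gamma_comp pk kl) -(ds_gamma_comp qk kl) E.
Qed.

Lemma lim_equiv_trans p q r :
  lim_equiv Lam p q -> lim_equiv Lam q r -> lim_equiv Lam p r.
Proof.
move=> /lim_equiv_eventually [k1 E1] /lim_equiv_eventually [k2 E2].
have [k [k1k k2k]] := ds_directed k1 k2.
have [pk _ Epq] := E1 k k1k; have [_ rk Eqr] := E2 k k2k.
by exists k; do !split=> //; rewrite Epq Eqr.
Qed.

Section Embedding.
Variables (B : ds_I Lam -> algebra L) (s : forall i, ds_X Lam i -> B i).
Hypothesis s_sat : forall i, sat (B i) (s i) (ds_phi Lam i).
Variable D : (ds_I Lam -> Prop) -> Prop.
Hypotheses (HD : ultrafilter D) (D_cone : forall i, D (fun l => le i l)).

(* Outside the cone above [tag p] the value of [gamma] is junk; this is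
   harmless since [D] contains that cone. *)
Definition thread (p : lim_pair Lam) : forall l, B l :=
  fun l => s l (gamma (tag p) l (tagged p)).

Definition lim_to_up (a : lim_car Lam) : up_car B D := qclass (thread (qrepr a)).

Local Notation up_eqE :=
  (eq_qclass (up_eq_refl HD B) (up_eq_sym HD B) (up_eq_trans HD B)).
Local Notation lim_eqE := (eq_qclass lim_equiv_refl lim_equiv_sym lim_equiv_trans).

Lemma thread_lim_class {i} (x : ds_X Lam i) :
  D (fun l => le i l /\ thread (qrepr (lim_class x)) l = s l (gamma i l x)).
Proof.
have /lim_equiv_eventually [k Ek] := qrepr_qclass lim_equiv_refl (existT _ i x).
apply: (ultrafilterS HD (D_cone k)) => l kl; have [il _ E] := Ek l kl.
by split=> //; rewrite /thread -E.
Qed.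

Lemma lim_to_upE (a : lim_car Lam) f :
  up_eq B D (thread (qrepr a)) f -> lim_to_up a = qclass f.
Proof. by move=> E; apply/up_eqE. Qed.

Lemma repr_lim_to_up_class {i} (x : ds_X Lam i) :
  D (fun l => le i l /\ qrepr (lim_to_up (lim_class x)) l = s l (gamma i l x)).
Proof.
have E := qrepr_qclass (up_eq_refl HD B) (thread (qrepr (lim_class x))).
apply: (ultrafilterS HD (ultrafilterI HD E (thread_lim_class x))).
by move=> l [E1 [il E2]]; split=> //; rewrite /lim_to_up -E1.
Qed.

Lemma realization_inj l : injective (s l).
Proof.
move=> u v suv; case: (eqVneq u v) => // /ds_phi_neq /s_sat.
by rewrite /= suv.
Qed.

Lemma lim_to_up_inj : injective lim_to_up.
Proof.
move=> a b /up_eqE E; rewrite -(qreprK a) -(qreprK b); apply/lim_eqE.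
move: E; case: (qrepr a) => i x; case: (qrepr b) => j y E.
have [k [ik jk]] := ds_directed i j.
have [l [kl El]] := ultrafilter_ex HD (ultrafilterI HD (D_cone k) E).
exists l; split; [exact: ds_le_trans ik kl | split; first exact: ds_le_trans jk kl].
exact: realization_inj El.
Qed.

Lemma lim_to_up_cst (c : lcst L) i (x : ds_X Lam i) :
  conjunct (lpos (tvar x) (tcst c)) (ds_phi Lam i) ->
  lim_to_up (lim_class x) = up_cst B D c.
Proof.
move=> xc; apply: lim_to_upE; rewrite /up_eq.
apply: (ultrafilterS HD (thread_lim_class x)) => l [il ->].
by have := s_sat _ _ (ds_phi_gamma il xc).
Qed.

Lemma lim_to_up_op (F : lop L) (j : ds_I Lam) (idx : 'I_(lar F) -> ds_I Lam)
    (xs : forall k, ds_X Lam (idx k)) (xj : ds_X Lam j) :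
  (forall k, le (idx k) j) ->
  conjunct (lpos (tapp F (fun k => tvar (gamma _ j (xs k)))) (tvar xj))
           (ds_phi Lam j) ->
  lim_to_up (lim_class xj) = up_op B D F (fun k => lim_to_up (lim_class (xs k))).
Proof.
move=> idx_j Fxj; apply: lim_to_upE; rewrite /up_eq.
have args := ultrafilter_forall HD (fun k => repr_lim_to_up_class (xs k)).
apply: (ultrafilterS HD (ultrafilterI HD (thread_lim_class xj) args)).
move=> l [[jl ->] args_l].
have /= <- := s_sat _ _ (ds_phi_gamma jl Fxj).
congr (aop _ F); apply: funext => k; have [_ ->] := args_l k.
by rewrite ds_gamma_comp.
Qed.

End Embedding.
End DirectSystem.

Theorem mainTheorem10 (L : language) (Lam : direct_system L)
  (HLam : is_direct_system Lam)
  (B : ds_I Lam -> algebra L)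
  (HB : forall i, realized (B i) (ds_phi Lam i)) :
  exists D : (ds_I Lam -> Prop) -> Prop,
    ultrafilter D /\
    exists h : lim_car Lam -> up_car B D, lim_embedding Lam B D h.
Proof.
pose s i := proj1_sig (cid (HB i)).
have s_sat i : sat (B i) (s i) (ds_phi Lam i) := proj2_sig (cid (HB i)).
have [D [HD D_cone]] := directed_cones_ultrafilter (proj1 HLam).
exists D; split=> //; exists (@lim_to_up L Lam B s D).
split; first exact: lim_to_up_inj.
split; first exact: lim_to_up_cst.
exact: lim_to_up_op.
Qed.
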